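(* Let $\mu$ be a continuous capacity on $(\Omega,\mathcal{F})$ and $\mathbf{Y}=\{Y_n\}_{n\in\mathbb{N}}$ a real-valued stochastic process on $(\Omega,\mathcal{F})$. Then $\mathbf{Y}$ is stationary on $(\Omega,\mathcal{F},\mu)$ if and only if $\mu_{\mathbf{Y}}$ is $\tau$-invariant, where $\tau$ is the shift on $\mathbb{R}^{\mathbb{N}}$.
   Context: A capacity is $\mu:\mathcal{F}\to[0,1]$ with $\mu(\emptyset)=0$, $\mu(\Omega)=1$, monotone; continuous if $\mu(A_n)\to\mu(A)$ whenever $A_n\uparrow A$ or $A_n\downarrow A$. $\mathbf{Y}$ is stationary if for all $n\in\mathbb{N}$, $k\in\mathbb{N}_0$ and Borel $A\subseteq\mathbb{R}^{k+1}$, $\mu(\{(Y_n,\dots,Y_{n+k})\in A\})=\mu(\{(Y_{n+1},\dots,Y_{n+1+k})\in A\})$. $\mathbb{R}^{\mathbb{N}}$ carries the $\sigma$-algebra $\sigma(\mathcal{C})$ generated by cylinders $\{\mathbf{x}:(x_1,\dots,x_n)\in H\}$, $n\in\mathbb{N}$, $H\in\mathcal{B}(\mathbb{R}^n)$; $\tau(x_1,x_2,x_3,\dots)=(x_2,x_3,\dots)$; $\mu_{\mathbf{Y}}(C)=\mu(\{\omega:(Y_1(\omega),Y_2(\omega),\dots)\in C\})$ for $C\in\sigma(\mathcal{C})$; $\tau$-invariance means $\mu_{\mathbf{Y}}(\tau^{-1}C)=\mu_{\mathbf{Y}}(C)$ for all $C\in\sigma(\mathcal{C})$. *)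

From HB Require Import structures.
From mathcomp Require Import all_boot all_order all_algebra.
From mathcomp Require Import all_classical all_reals all_analysis.
Set Implicit Arguments. Unset Strict Implicit. Unset Printing Implicit Defensive.
Import Order.TTheory GRing.Theory Num.Theory.
Import numFieldNormedType.Exports.
Local Open Scope classical_set_scope.
Local Open Scope ring_scope.

Section Defs.
Context {R : realType}.

Definition borel_rV (n : nat) : set (set 'rV[R]_n) :=
  <<s [set A : set 'rV[R]_n | open A] >>.

Definition capacity {d} {Omega : measurableType d} (mu : set Omega -> R) : Prop :=
  [/\ mu set0 = 0, mu setT = 1,
      (forall A, measurable A -> 0 <= mu A <= 1) &
      (forall A B, measurable A -> measurable B -> A `<=` B -> mu A <= mu B)].

Definition continuous_capacity {d} {Omega : measurableType d}
    (mu : set Omega -> R) : Prop :=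
  capacity mu /\
  (forall (A : nat -> set Omega) (B : set Omega),
      (forall n, measurable (A n)) -> measurable B ->
      (forall n, A n `<=` A n.+1) -> \bigcup_n A n = B ->
      (mu \o A) @ \oo --> mu B) /\
  (forall (A : nat -> set Omega) (B : set Omega),
      (forall n, measurable (A n)) -> measurable B ->
      (forall n, A n.+1 `<=` A n) -> \bigcap_n A n = B ->
      (mu \o A) @ \oo --> mu B).

(* A real-valued process Y = (Y_1, Y_2, ...); index 1 is encoded as 0. *)
Definition stochastic_process {d} {Omega : measurableType d}
    (Y : nat -> Omega -> R) : Prop :=
  forall n, measurable_fun setT (Y n).

Definition stationary {d} {Omega : measurableType d}
    (mu : set Omega -> R) (Y : nat -> Omega -> R) : Prop :=
  forall (n k : nat) (A : set 'rV[R]_k.+1), borel_rV A ->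
    mu [set w | A (\row_(i < k.+1) Y (n + i)%N w)] =
    mu [set w | A (\row_(i < k.+1) Y (n.+1 + i)%N w)].

Definition cylinders : set (set (nat -> R)) :=
  [set C | exists (n : nat) (H : set 'rV[R]_n.+1), borel_rV H /\
           C = [set x : nat -> R | H (\row_(i < n.+1) x i)]].

Definition sigma_cyl : set (set (nat -> R)) := <<s cylinders >>.

Definition shift (x : nat -> R) : nat -> R := fun n => x n.+1.

Definition law {d} {Omega : measurableType d}
    (mu : set Omega -> R) (Y : nat -> Omega -> R) (C : set (nat -> R)) : R :=
  mu [set w | C (fun n => Y n w)].

Definition shift_invariant (nu : set (nat -> R) -> R) : Prop :=
  forall C, sigma_cyl C -> nu (shift @^-1` C) = nu C.

End Defs.

(* Both directions compare the two set functions C |-> mu_Y (shift^-1 C) and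
   mu_Y on sigma(C).  On a cylinder {x | (x_1, ..., x_(k+1)) in H} they are the
   mu-laws of (Y_2, ..., Y_(k+2)) and (Y_1, ..., Y_(k+1)) at H, and every window
   (Y_n, ..., Y_(n+k)) is a cylinder condition on Y, so stationarity is exactly
   agreement on cylinders.  Cylinders form an algebra generating sigma(C), and
   since Y is measurable and mu is continuous, both set functions are continuous
   along monotone sequences of sigma(C).  Hence the sets on which they agree form
   a monotone class containing the algebra, i.e. all of sigma(C); no additivity
   of mu is needed. *)

From mathcomp Require Import all_boot all_order all_algebra.
From mathcomp Require Import all_classical all_reals all_analysis.
From mathcomp Require Import lra.

Set Implicit Arguments. Unset Strict Implicit. Unset Printing Implicit Defensive.
Import Order.TTheory GRing.Theory Num.Theory.
Import numFieldNormedType.Exports.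
Local Open Scope classical_set_scope.
Local Open Scope ring_scope.

Section generated_sigma_algebra.
Variable T : Type.
Implicit Types G M : set (set T).

Lemma g_sigma_algebra_sub_g_sigma_ring G : G setT -> <<s G >> `<=` <<sr G >>.
Proof.
move=> GT; apply: smallest_sub; last exact: sub_g_sigma_ring.
have [sr0 srD srU] := smallest_sigma_ring G.
by split => // A srA; apply: srD => //; exact: sub_g_sigma_ring.
Qed.

Lemma monotone_setring_sub_g_sigma_algebra G M :
  monotone M -> setring G -> G setT -> G `<=` M -> <<s G >> `<=` M.
Proof.
move=> mM rG GT GM A /(g_sigma_algebra_sub_g_sigma_ring GT).
exact: monotone_setring_sub_g_sigma_ring.
Qed.

End generated_sigma_algebra.

Lemma g_sigma_algebra_preimage (aT rT : Type) (M : set (set aT))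
    (G : set (set rT)) (f : aT -> rT) :
  sigma_algebra setT M -> (forall B, G B -> M (f @^-1` B)) ->
  forall B, <<s G >> B -> M (f @^-1` B).
Proof.
move=> [M0 MD MU] GM; apply: smallest_sub => //; split => /=.
- by rewrite preimage_set0.
- by move=> B MB; rewrite setTD -preimage_setC -setTD; exact: MD.
- by move=> F MF; rewrite preimage_bigcup; exact: MU.
Qed.

Section g_sigma_algebra_pointed.
Variables (T : pointedType) (G : set (set T)).

Lemma g_sigma_algebraU : setU_closed <<s G >>.
Proof. exact: (@measurableU _ (g_sigma_algebraType G)). Qed.

Lemma g_sigma_algebraD : setD_closed <<s G >>.
Proof. exact: (@measurableD _ (g_sigma_algebraType G)). Qed.

Lemma g_sigma_algebra_bigcap (F : (set T)^nat) :
  (forall n, <<s G >> (F n)) -> <<s G >> (\bigcap_n F n).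
Proof. exact: (@bigcapT_measurable _ (g_sigma_algebraType G)). Qed.

End g_sigma_algebra_pointed.

Lemma continuous_g_sigma_open_preimage (T U : topologicalType) (f : T -> U) :
  continuous f -> forall B, <<s [set A : set U | open A] >> B ->
  <<s [set A : set T | open A] >> (f @^-1` B).
Proof.
move=> cf; apply: g_sigma_algebra_preimage; first exact: smallest_sigma_algebra.
by move=> B oB; apply: sub_sigma_algebra; exact: open_comp.
Qed.

Lemma continuous_mxsub (K : numDomainType) (T : pseudoMetricType K)
    m n m' n' (f : 'I_m' -> 'I_m) (g : 'I_n' -> 'I_n) :
  continuous (@mxsub T m n m' n' f g).
Proof.
move=> A B /nbhs_ballP[e e0 eB]; apply/nbhs_ballP; exists e => // C [_ AC].
by apply: eB; split => // i j; rewrite !mxE; exact: AC.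
Qed.

Section rational_balls.
Variables (R : realType) (k : nat).

Definition rat_ball (q : 'rV[rat]_k * rat) : set 'rV[R]_k :=
  ball (map_mx (ratr : rat -> R) q.1 : 'rV[R]_k) (ratr q.2 : R).

Lemma open_bigcup_rat_ball (U : set 'rV[R]_k) : open U ->
  U = \bigcup_(q in [set q | rat_ball q `<=` U]) rat_ball q.
Proof.
move=> oU; apply/seteqP; split; last by move=> x [q qU]; exact: qU.
move=> x Ux.
have /nbhs_ballP[e e0 eU] : nbhs x U by rewrite openE in oU; exact: oU.
have e20 : 0 < e / 2 by rewrite divr_gt0.
have [r] := rat_in_itvoo e20.
rewrite in_itv /= => /andP[r0 re].
have /choice[c xc] (j : 'I_k) :
    exists q : rat, ratr q \in `](x 0 j - ratr r), (x 0 j + ratr r)[.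
  by apply: rat_in_itvoo; lra.
have cx : rat_ball (\row_j c j, r) x.
  split => // i j; rewrite (ord1 i) !mxE.
  move: (xc j); rewrite in_itv /= => /andP[lt_cx lt_xc].
  by rewrite -ball_normE /ball_ /= ltr_distlC; apply/andP; split; lra.
exists (\row_j c j, r) => // y cy; apply: eU.
apply: (@le_ball _ _ _ (ratr r + ratr r)); first lra.
exact: ball_triangle (ball_sym cx) cy.
Qed.

End rational_balls.

Section row_preimage.
Context {R : realType} d (Omega : measurableType d) (k : nat).
Variable Z : 'I_k -> Omega -> R.
Hypothesis mZ : forall i, measurable_fun setT (Z i).

Let row w : 'rV[R]_k := \row_i Z i w.

Lemma measurable_row_preimage_ball (c : 'rV[R]_k) (e : R) :
  measurable (row @^-1` ball c e).
Proof.
have [e0|e_le0] := ltP 0 e; last first.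
  rewrite (_ : row @^-1` ball c e = set0); first exact: measurable0.
  by apply/seteqP; split => // w [/= e_gt0]; move: e_le0; rewrite leNgt e_gt0.
rewrite (_ : row @^-1` ball c e = \bigcap_(j in [set: 'I_k]) (Z j @^-1` ball (c 0 j) e)).
  apply: fin_bigcap_measurable => [|j _]; first exact: finite_finset.
  rewrite -[X in measurable X]setTI.
  by apply: (mZ j measurableT); exact: measurable_realfun.measurable_ball.
apply/seteqP; split => [w [_ cw] j _|w cw]; first by have := cw 0 j; rewrite mxE.
by split => // i j; rewrite (ord1 i) mxE; exact: cw.
Qed.

Lemma measurable_row_preimage_open (U : set 'rV[R]_k) :
  open U -> measurable (row @^-1` U).
Proof.
move=> /open_bigcup_rat_ball ->; rewrite preimage_bigcup bigcup_mkcond.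
apply: countable_bigcupT_measurable => [|q]; first exact: countableP.
by case: ifP => _; [exact: measurable_row_preimage_ball | exact: measurable0].
Qed.

Lemma measurable_row_preimage (B : set 'rV[R]_k) :
  borel_rV B -> measurable (row @^-1` B).
Proof.
apply: g_sigma_algebra_preimage; first exact: sigma_algebra_measurable.
by move=> U; exact: measurable_row_preimage_open.
Qed.

End row_preimage.

Section cylinders.
Context {R : realType}.

Definition cylinder n (H : set 'rV[R]_n.+1) : set (nat -> R) :=
  [set x | H (\row_(i < n.+1) x i)].

Lemma cylinder_rowsub n k (g : 'I_k -> 'I_n.+1) (A : set 'rV[R]_k) :
  borel_rV A -> exists2 H : set 'rV[R]_n.+1,
    borel_rV H & [set x : nat -> R | A (\row_i x (g i))] = cylinder H.
Proof.
move=> BA; exists (mxsub id g @^-1` A).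
  by apply: continuous_g_sigma_open_preimage BA; exact: continuous_mxsub.
by apply/seteqP; split => x; rewrite /cylinder /= (_ : mxsub _ _ _ = \row_i x (g i));
  do ?[apply/rowP => i; rewrite !mxE].
Qed.

Lemma cylinder_widen n m (H : set 'rV[R]_n.+1) : (n <= m)%N -> borel_rV H ->
  exists2 H' : set 'rV[R]_m.+1, borel_rV H' & cylinder H = cylinder H'.
Proof.
by move=> nm; exact: (cylinder_rowsub (widen_ord (nm : (n.+1 <= m.+1)%N))).
Qed.

Lemma cylinders_setT : cylinders [set: nat -> R].
Proof.
exists 0%N, setT; split => //.
by rewrite -setC0; apply: sigma_algebraC; exact: sigma_algebra0.
Qed.

Lemma setring_cylinders : setring (@cylinders R).
Proof.
have common_dim (C1 C2 : set (nat -> R)) : cylinders C1 -> cylinders C2 ->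
    exists N (H1 H2 : set 'rV[R]_N.+1), [/\ borel_rV H1, borel_rV H2,
      C1 = cylinder H1 & C2 = cylinder H2].
  move=> [n1 [H1 [BH1 ->]]] [n2 [H2 [BH2 ->]]].
  rewrite -/(cylinder H1) -/(cylinder H2).
  have [H1' BH1' ->] := cylinder_widen (leq_maxl n1 n2) BH1.
  have [H2' BH2' ->] := cylinder_widen (leq_maxr n1 n2) BH2.
  by exists (maxn n1 n2), H1', H2'.
split.
- by exists 0%N, set0; split => //; exact: sigma_algebra0.
- move=> C1 C2 cC1 cC2.
  have [N [H1 [H2 [BH1 BH2 -> ->]]]] := common_dim _ _ cC1 cC2.
  by exists N, (H1 `|` H2); split => //; exact: g_sigma_algebraU.
- move=> C1 C2 cC1 cC2.
  have [N [H1 [H2 [BH1 BH2 -> ->]]]] := common_dim _ _ cC1 cC2.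
  by exists N, (H1 `\` H2); split => //; exact: g_sigma_algebraD.
Qed.

Lemma measurable_process_preimage d (Omega : measurableType d)
    (Y : nat -> Omega -> R) :
  stochastic_process Y -> forall C, sigma_cyl C -> measurable [set w | C (Y^~ w)].
Proof.
move=> mY; apply: (g_sigma_algebra_preimage (f := fun w n => Y n w)).
  exact: sigma_algebra_measurable.
move=> _ [n [H [BH ->]]].
exact: (measurable_row_preimage (Z := fun i : 'I_n.+1 => Y i)).
Qed.

End cylinders.

Section monotone_continuity.
Context {R : realType} (T : pointedType).

Definition monotone_continuous (D : set (set T)) (nu : set T -> R) : Prop :=
  (forall F : (set T)^nat, (forall n, D (F n)) -> (forall n, F n `<=` F n.+1) ->
     nu \o F @ \oo --> nu (\bigcup_n F n)) /\
  (forall F : (set T)^nat, (forall n, D (F n)) -> (forall n, F n.+1 `<=` F n) ->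
     nu \o F @ \oo --> nu (\bigcap_n F n)).

Lemma continuous_capacity_preimage d (Omega : measurableType d)
    (mu : set Omega -> R) (D : set (set T)) (f : Omega -> T) :
  continuous_capacity mu -> (forall A, D A -> measurable (f @^-1` A)) ->
  monotone_continuous D (fun A => mu (f @^-1` A)).
Proof.
move=> [_ [mu_up mu_down]] mf; split => F DF mono_F.
- apply: (mu_up (fun n => f @^-1` F n)) => [n||n|]; first exact: mf.
  + by rewrite preimage_bigcup; apply: bigcupT_measurable => n; exact: mf.
  + exact: preimage_subset.
  + by rewrite preimage_bigcup.
- apply: (mu_down (fun n => f @^-1` F n)) => [n||n|]; first exact: mf.
  + by rewrite preimage_bigcap; apply: bigcapT_measurable => n; exact: mf.
  + exact: preimage_subset.
  + by rewrite preimage_bigcap.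
Qed.

Lemma monotone_continuous_eq (G : set (set T)) (nu1 nu2 : set T -> R) :
  setring G -> G setT ->
  monotone_continuous <<s G >> nu1 -> monotone_continuous <<s G >> nu2 ->
  (forall A, G A -> nu1 A = nu2 A) -> forall A, <<s G >> A -> nu1 A = nu2 A.
Proof.
move=> rG GT [up1 down1] [up2 down2] eqG.
have lim_eq B F : (forall n, nu1 (F n) = nu2 (F n)) ->
    nu1 \o F @ \oo --> nu1 B -> nu2 \o F @ \oo --> nu2 B -> nu1 B = nu2 B.
  move=> eqF h1 h2; have nuF : nu1 \o F = nu2 \o F := funext eqF.
  by rewrite nuF in h1; exact: (cvg_unique (@Rhausdorff R) h1 h2).
suff agree : <<s G >> `<=` [set A | <<s G >> A /\ nu1 A = nu2 A].
  by move=> A /agree[].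
apply: monotone_setring_sub_g_sigma_algebra => //; last first.
  by move=> A GA; split; [exact: sub_sigma_algebra | exact: eqG].
split => F mono_F GF; have sF n : <<s G >> (F n) := (GF n).1.
- have F_up n : F n `<=` F n.+1 by apply/subsetPset/mono_F.
  split; first exact: sigma_algebra_bigcup.
  exact: lim_eq (fun n => (GF n).2) (up1 _ sF F_up) (up2 _ sF F_up).
- have F_down n : F n.+1 `<=` F n by apply/subsetPset/mono_F.
  split; first exact: g_sigma_algebra_bigcap.
  exact: lim_eq (fun n => (GF n).2) (down1 _ sF F_down) (down2 _ sF F_down).
Qed.

End monotone_continuity.

Lemma law_monotone_continuous {R : realType} d (Omega : measurableType d)
    (mu : set Omega -> R) (Y : nat -> Omega -> R) :
  continuous_capacity mu -> stochastic_process Y ->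
  monotone_continuous sigma_cyl (law mu Y).
Proof.
move=> muc mY.
exact: continuous_capacity_preimage muc (measurable_process_preimage mY).
Qed.

Theorem proposition7 (R : realType) (d : measure_display) (Omega : measurableType d)
    (mu : set Omega -> R) (Y : nat -> Omega -> R) :
  continuous_capacity mu -> stochastic_process Y ->
  (stationary mu Y <-> shift_invariant (law mu Y)).
Proof.
move=> muc mY; split => [stationary_Y | invariant_law n k A BA].
- have mY1 : stochastic_process (fun n => Y n.+1) by move=> n; exact: mY.
  apply: (@monotone_continuous_eq _ _ _ (law mu (fun n => Y n.+1)) (law mu Y)).
  + exact: setring_cylinders.
  + exact: cylinders_setT.
  + exact: law_monotone_continuous.
  + exact: law_monotone_continuous.
  + by move=> _ [m [H [BH ->]]]; exact/esym/(stationary_Y 0%N).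
- have lt_shift (i : 'I_k.+1) : (n + i < (n + k).+1)%N.
    by rewrite ltnS leq_add2l -ltnS.
  have [H BH eqH] := cylinder_rowsub (fun i => Ordinal (lt_shift i)) BA.
  apply/esym/(invariant_law [set x | A (\row_(i < k.+1) x (n + i)%N)]).
  by apply: sub_sigma_algebra; exists (n + k)%N, H; split; [exact: BH | exact: eqH].
Qed.
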